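(* Let $X$ and $Y$ be separable metric spaces and let $f : X \to Y$ be a bijection such that both $f$ and $f^{-1} : Y \to X$ are open-LC functions. Then $f$ is a countable homeomorphism, i.e., $X$ can be partitioned into countably many pairwise disjoint sets $X_i$ such that every restriction $f|_{X_i} : X_i \to f(X_i)$ is a homeomorphism.
   Context: A subset of a topological space is an LC-set if it is the intersection of an open set and a closed set. A function $f : X \to Y$ (not necessarily continuous) is open-LC if for every open $U \subset X$ the image $f(U)$ is an LC-set in $Y$. *)

From Stdlib Require Import Reals.
Open Scope R_scope.

Definition is_metric {X : Type} (d : X -> X -> R) : Prop :=
  (forall x y, 0 <= d x y) /\
  (forall x y, d x y = 0 <-> x = y) /\
  (forall x y, d x y = d y x) /\
  (forall x y z, d x z <= d x y + d y z).

Definition countable_set {X : Type} (D : X -> Prop) : Prop :=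
  exists c : X -> nat, forall x y, D x -> D y -> c x = c y -> x = y.

Definition separable {X : Type} (d : X -> X -> R) : Prop :=
  exists D : X -> Prop, countable_set D /\
    forall x eps, 0 < eps -> exists y, D y /\ d x y < eps.

Definition is_open {X : Type} (d : X -> X -> R) (U : X -> Prop) : Prop :=
  forall x, U x -> exists eps, 0 < eps /\ forall y, d x y < eps -> U y.

Definition is_closed {X : Type} (d : X -> X -> R) (F : X -> Prop) : Prop :=
  is_open d (fun x => ~ F x).

Definition LC_set {X : Type} (d : X -> X -> R) (A : X -> Prop) : Prop :=
  exists U F, is_open d U /\ is_closed d F /\ forall x, A x <-> (U x /\ F x).

Definition image {X Y : Type} (f : X -> Y) (A : X -> Prop) : Y -> Prop :=
  fun y => exists x, A x /\ f x = y.

Definition open_LC {X Y : Type} (dX : X -> X -> R) (dY : Y -> Y -> R)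
  (f : X -> Y) : Prop :=
  forall U, is_open dX U -> LC_set dY (image f U).

(* continuity of the restriction h|_A : A -> Y (A with the subspace metric) *)
Definition continuous_on {X Y : Type} (dX : X -> X -> R) (dY : Y -> Y -> R)
  (h : X -> Y) (A : X -> Prop) : Prop :=
  forall x, A x -> forall eps, 0 < eps -> exists delta, 0 < delta /\
    forall x', A x' -> dX x x' < delta -> dY (h x) (h x') < eps.

From Stdlib Require Import Reals Lra Lia Classical ClassicalEpsilon List Cantor.
Open Scope R_scope.

(* A point is a condensation point when all its neighbourhoods are uncountable.
   In a separable metric space the other points form a countable set, and the
   condensation points form a set that is dense in itself.

   Key lemma: if h is injective and the h-preimage of every open set is an
   LC-set, then h is continuous on every set Z that is dense in itself.
   Otherwise some x_k -> z in Z keep h(x_k) at distance eps from h(z).  A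
   diagonal construction gives points b_j, dense in Z, and radii r_j > 0 such
   that the balls B(h b_j, r_j) miss every h(x_(m_k)) along a subsequence.
   The preimage of V = B(h z, eps) ∪ ⋃_j B(h b_j, r_j) is U ∩ F with U open
   and F closed; F contains every b_j, hence Z, and U contains z, hence
   x_(m_k) for large k, so h(x_(m_k)) ∈ V, which is absurd.

   Images under f^-1 are preimages under f and vice versa, so f is a
   homeomorphism on the set of x such that x and f x are condensation points;
   the countably many remaining points are taken as singletons. *)

Section MetricFacts.
Context {A : Type} {d : A -> A -> R} (hm : is_metric d).

Lemma dist_refl x : d x x = 0.
Proof. destruct hm as (_ & Hd & _). apply Hd. reflexivity. Qed.

Lemma dist_sym x y : d x y = d y x.
Proof. destruct hm as (_ & _ & Hs & _). apply Hs. Qed.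

Lemma dist_triangle x y z : d x z <= d x y + d y z.
Proof. destruct hm as (_ & _ & _ & Ht). apply Ht. Qed.

Lemma dist_gt0 x y : x <> y -> 0 < d x y.
Proof.
  destruct hm as (Hp & Hd & _). intros Hxy.
  destruct (Hp x y) as [H|H]; [exact H|].
  exfalso. apply Hxy, Hd. auto.
Qed.

Lemma list_dist_lower_bound (y0 : A) (L : list A) (e : R) : 0 < e ->
  exists r, 0 < r /\ r <= e /\ forall y, In y L -> y <> y0 -> r <= d y0 y.
Proof.
  intros He. induction L as [|y L IH].
  - exists e. repeat split; [exact He | lra | intros y []].
  - destruct IH as (r & Hr & Hre & Hfar).
    destruct (classic (y = y0)) as [->|Hy].
    + exists r. repeat split; auto.
      intros y' [<-|Hy'] Hne; [contradiction | auto].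
    + pose proof (dist_gt0 _ _ (not_eq_sym Hy)).
      exists (Rmin r (d y0 y)). repeat split.
      * apply Rmin_pos; assumption.
      * pose proof (Rmin_l r (d y0 y)). lra.
      * intros y' [<-|Hy'] Hne; [apply Rmin_r|].
        pose proof (Rmin_l r (d y0 y)). pose proof (Hfar y' Hy' Hne). lra.
Qed.

End MetricFacts.

Lemma archimed_inv (e : R) : 0 < e -> exists n : nat, / (INR n + 1) < e.
Proof.
  intros He. destruct (archimed_cor1 e He) as [[|n] [Hn Hpos]]; [lia|].
  exists n. rewrite <- S_INR. exact Hn.
Qed.

Lemma inv_INR_succ_pos (n : nat) : 0 < / (INR n + 1).
Proof. apply Rinv_0_lt_compat. pose proof (pos_INR n). lra. Qed.

Lemma inv_INR_succ_le (k n : nat) : (k <= n)%nat -> / (INR n + 1) <= / (INR k + 1).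
Proof.
  intros Hkn. apply Rinv_le_contravar.
  - pose proof (pos_INR k). lra.
  - apply le_INR in Hkn. lra.
Qed.

Section Countable.
Context {A : Type}.

Lemma countable_sub (P Q : A -> Prop) :
  (forall x, P x -> Q x) -> countable_set Q -> countable_set P.
Proof. intros HPQ [c Hc]. exists c. auto. Qed.

Lemma countable_setU (P Q : A -> Prop) :
  countable_set P -> countable_set Q -> countable_set (fun x => P x \/ Q x).
Proof.
  intros [cP HP] [cQ HQ].
  exists (fun x => if excluded_middle_informative (P x) then (2 * cP x)%nat
                   else S (2 * cQ x)).
  intros x y Hx Hy.
  destruct (excluded_middle_informative (P x)) as [Px|Px],
           (excluded_middle_informative (P y)) as [Py|Py]; intros E.
  - apply HP; auto. lia.
  - lia.
  - lia.
  - apply HQ; [tauto | tauto | lia].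
Qed.

Lemma countable_preimage {B : Type} (f : A -> B) (Q : B -> Prop) :
  (forall x y, f x = f y -> x = y) -> countable_set Q -> countable_set (fun x => Q (f x)).
Proof. intros finj [c Hc]. exists (fun x => c (f x)). auto. Qed.

Lemma countable_cover (P : A -> Prop) (Q : nat -> A -> Prop) :
  (forall p, countable_set (Q p)) -> (forall x, P x -> exists p, Q p x) ->
  countable_set P.
Proof.
  intros HQ HP.
  destruct (choice _ HQ) as [code Hcode].
  assert (Hidx : forall x, exists p, P x -> Q p x).
  { intros x. destruct (classic (P x)) as [Px|Px].
    - destruct (HP x Px) as [p Hp]. exists p. auto.
    - exists O. contradiction. }
  destruct (choice _ Hidx) as [idx Hidx'].
  exists (fun x => to_nat (idx x, code (idx x) x)).
  intros x y Px Py E. apply to_nat_inj in E. injection E as Ei Ec.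
  rewrite Ei in Ec. apply (Hcode (idx y)); auto.
  rewrite <- Ei. auto.
Qed.

End Countable.

Lemma separable_countable_base {A : Type} {d : A -> A -> R} :
  is_metric d -> separable d ->
  exists W : nat -> A -> Prop, (forall k, is_open d (W k)) /\
    forall a rho, 0 < rho -> exists k, W k a /\ forall b, W k b -> d a b < rho.
Proof.
  intros hm [D [[cD HcD] HD]].
  exists (fun k b => exists c, D c /\ cD c = fst (of_nat k) /\
                              d c b < / (INR (snd (of_nat k)) + 1)).
  split.
  - intros k b (c & Dc & Ec & Hcb).
    exists (/ (INR (snd (of_nat k)) + 1) - d c b). split; [lra|].
    intros b' Hb'. exists c. repeat split; auto.
    pose proof (dist_triangle hm c b b'). lra.
  - intros a rho Hrho.
    destruct (archimed_inv (rho / 2)) as [n Hn]; [lra|].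
    destruct (HD a _ (inv_INR_succ_pos n)) as [c [Dc Hac]].
    exists (to_nat (cD c, n)). rewrite cancel_of_to. simpl. split.
    + exists c. rewrite (dist_sym hm). auto.
    + intros b (c' & Dc' & Ec' & Hcb).
      assert (c' = c) as -> by (apply HcD; auto).
      pose proof (dist_triangle hm a c b). lra.
Qed.

Definition condensation_point {A : Type} (d : A -> A -> R) (y : A) : Prop :=
  forall e, 0 < e -> ~ countable_set (fun a => d y a < e).

Definition dense_in_itself {A : Type} (d : A -> A -> R) (Z : A -> Prop) : Prop :=
  forall z, Z z -> forall e, 0 < e -> exists z', Z z' /\ z' <> z /\ d z z' < e.

Lemma countable_not_condensation {A : Type} {d : A -> A -> R} :
  is_metric d -> separable d -> countable_set (fun y => ~ condensation_point d y).
Proof.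
  intros hm hs. destruct (separable_countable_base hm hs) as [W [_ HW]].
  apply (countable_cover _ (fun k a => W k a /\ countable_set (W k))).
  - intros k. destruct (classic (countable_set (W k))) as [Hk|Hk].
    + apply (countable_sub _ (W k)); [tauto | exact Hk].
    + exists (fun _ => O). intros x y [_ H]. contradiction.
  - intros y Hy. apply not_all_ex_not in Hy as [e He].
    apply imply_to_and in He as [He Hc]. apply NNPP in Hc.
    destruct (HW y e He) as [k [Hk Hsub]].
    exists k. split; [exact Hk|]. exact (countable_sub _ _ Hsub Hc).
Qed.

Lemma condensation_dense_in_itself {A : Type} {d : A -> A -> R} :
  is_metric d -> separable d -> dense_in_itself d (condensation_point d).
Proof.
  intros hm hs y Hy e He. apply NNPP. intros Hn. apply (Hy e He).
  apply (countable_sub _ (fun a => a = y \/ ~ condensation_point d a)).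
  - intros a Ha. destruct (classic (a = y)) as [->|Hay]; [now left | right].
    intros Ca. apply Hn. exists a. auto.
  - apply countable_setU; [|exact (countable_not_condensation hm hs)].
    exists (fun _ => O). intros a b -> ->. reflexivity.
Qed.

Lemma dense_in_itself_avoid {A : Type} {d : A -> A -> R} (hm : is_metric d)
  (Z U : A -> Prop) (a : A) (L : list A) :
  dense_in_itself d Z -> is_open d U -> Z a -> U a ->
  exists b, Z b /\ U b /\ ~ In b L.
Proof.
  intros HZ HU Za Ua. destruct (HU a Ua) as [e [He Hball]].
  destruct (list_dist_lower_bound hm a L e He) as (r & Hr & Hre & Hfar).
  destruct (HZ a Za r Hr) as (b & Zb & Hba & Hab).
  exists b. repeat split; [exact Zb | apply Hball; lra |].
  intros Hb. specialize (Hfar b Hb Hba). lra.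
Qed.

Lemma finite_preimage {A B : Type} (h : A -> B) (L : list B) :
  (forall a a', h a = h a' -> a = a') ->
  exists L' : list A, forall a, In (h a) L -> In a L'.
Proof.
  intros hinj. induction L as [|y L [L' HL']].
  - exists nil. intros a [].
  - destruct (classic (exists a, h a = y)) as [[a0 <-]|Hy].
    + exists (a0 :: L'). intros a [E|Ha]; [left; auto | right; auto].
    + exists L'. intros a [E|Ha]; [exfalso; apply Hy; eauto | auto].
Qed.

Definition infinitely_often (P : nat -> Prop) : Prop :=
  forall N, exists m, (N <= m)%nat /\ P m.

Lemma infinitely_often_or (P Q : nat -> Prop) :
  infinitely_often (fun m => P m \/ Q m) -> infinitely_often P \/ infinitely_often Q.
Proof.
  intros H. apply NNPP. intros Hn. apply not_or_and in Hn as [HP HQ].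
  apply not_all_ex_not in HP as [N1 HP]. apply not_all_ex_not in HQ as [N2 HQ].
  destruct (H (N1 + N2)%nat) as [m [Hm [Pm|Qm]]];
    [apply HP | apply HQ]; exists m; split; auto; lia.
Qed.

Lemma infinitely_often_far {B : Type} {d : B -> B -> R} (hm : is_metric d)
  (P : nat -> Prop) (q : nat -> B) (p1 p2 : B) :
  p1 <> p2 -> infinitely_often P ->
  (exists e, 0 < e /\ infinitely_often (fun m => P m /\ e <= d p1 (q m))) \/
  (exists e, 0 < e /\ infinitely_often (fun m => P m /\ e <= d p2 (q m))).
Proof.
  intros Hne HP. set (e := d p1 p2 / 2).
  assert (He : 0 < e) by (pose proof (dist_gt0 hm _ _ Hne); unfold e; lra).
  destruct (infinitely_often_or (fun m => P m /\ e <= d p1 (q m))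
                                (fun m => P m /\ e <= d p2 (q m))) as [H|H].
  - intros N. destruct (HP N) as [m [HNm Pm]]. exists m. split; [exact HNm|].
    pose proof (dist_triangle hm p1 (q m) p2) as Htri. rewrite (dist_sym hm (q m)) in Htri.
    destruct (Rle_or_lt e (d p1 (q m))) as [H1|H1]; [left | right]; split; auto.
    unfold e in *. lra.
  - left. exists e. auto.
  - right. exists e. auto.
Qed.

Fixpoint history {T : Type} (u : nat -> T) (k : nat) : list T :=
  match k with O => nil | S k => u k :: history u k end.

Lemma In_history {T : Type} (u : nat -> T) (j k : nat) :
  (j < k)%nat -> In (u j) (history u k).
Proof.
  induction k as [|k IH]; intros Hjk; [lia|]. simpl.
  destruct (Nat.eq_dec j k) as [->|Hne]; [left; reflexivity | right; apply IH; lia].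
Qed.

Fixpoint iterate_choice {T : Type} (next : nat -> list T -> T) (k : nat) : list T :=
  match k with O => nil | S k => next k (iterate_choice next k) :: iterate_choice next k end.

Lemma list_dependent_choice {T : Type} (t0 : T) (Inv : list T -> Prop)
  (Step : nat -> list T -> T -> Prop) :
  Inv nil -> (forall k s, Inv s -> exists t, Step k s t /\ Inv (t :: s)) ->
  exists u : nat -> T, forall k, Step k (history u k) (u k) /\ Inv (history u (S k)).
Proof.
  intros H0 HS.
  set (next k s := epsilon (inhabits t0) (fun t => Step k s t /\ Inv (t :: s))).
  set (u k := next k (iterate_choice next k)).
  assert (Hu : forall k, history u k = iterate_choice next k).
  { induction k as [|k IH]; [reflexivity | simpl; rewrite IH; reflexivity]. }
  assert (Hnext : forall k s, Inv s -> Step k s (next k s) /\ Inv (next k s :: s)).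
  { intros k s Hs. apply epsilon_spec, HS, Hs. }
  assert (Hinv : forall k, Inv (iterate_choice next k)).
  { induction k as [|k IH]; [exact H0 | apply Hnext, IH]. }
  exists u. intros k. simpl. rewrite Hu. apply Hnext, Hinv.
Qed.

Record ball_choice (A : Type) := BallChoice { center : A; radius : R; index : nat }.
Arguments BallChoice {A}.
Arguments center {A}.
Arguments radius {A}.
Arguments index {A}.

Section SeparatingFamily.
Context {A B : Type} {dA : A -> A -> R} {dB : B -> B -> R}.
Hypotheses (hmA : is_metric dA) (hmB : is_metric dB).
Variables (h : A -> B) (Z : A -> Prop) (W : nat -> A -> Prop) (y : nat -> A) (z0 : A).
Hypotheses (hinj : forall a a', h a = h a' -> a = a')
  (HZ : dense_in_itself dA Z) (Zz0 : Z z0) (W_open : forall k, is_open dA (W k))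
  (W_base : forall a rho, 0 < rho -> exists k, W k a /\ forall b, W k b -> dA a b < rho).

Definition represents (k : nat) (b : A) : Prop :=
  Z b /\ ((exists a, Z a /\ W k a) -> W k b).

Lemma represents_avoiding (k : nat) (L : list B) :
  exists b, represents k b /\ ~ In (h b) L.
Proof.
  destruct (finite_preimage h L hinj) as [L' HL'].
  assert (Havoid : forall U a, is_open dA U -> Z a -> U a ->
                   exists b, Z b /\ U b /\ ~ In (h b) L).
  { intros U a HU Za Ua.
    destruct (dense_in_itself_avoid hmA Z U a L' HZ HU Za Ua) as (b & Zb & Ub & Hb).
    exists b. repeat split; auto. }
  destruct (classic (exists a, Z a /\ W k a)) as [[a [Za Wa]]|Hn].
  - destruct (Havoid (W k) a (W_open k) Za Wa) as (b & Zb & Wb & Hb).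
    exists b. repeat split; auto.
  - assert (HT : is_open dA (fun _ => True)) by (intros x _; exists 1; split; [lra | auto]).
    destruct (Havoid _ z0 HT Zz0 I) as (b & Zb & _ & Hb).
    exists b. repeat split; auto. contradiction.
Qed.

Definition far_from (s : list (ball_choice A)) (m : nat) : Prop :=
  forall t, In t s -> radius t <= dB (h (center t)) (h (y m)).

Definition good_choice (k : nat) (s : list (ball_choice A)) (t : ball_choice A) : Prop :=
  represents k (center t) /\ 0 < radius t /\ (k <= index t)%nat /\
  (forall t', In t' s -> radius t <= dB (h (center t)) (h (y (index t')))) /\
  far_from (t :: s) (index t).

Lemma good_choice_exists (k : nat) (s : list (ball_choice A)) :
  infinitely_often (far_from s) ->
  exists t, good_choice k s t /\ infinitely_often (far_from (t :: s)).
Proof.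
  intros Hs. set (L := map (fun t => h (y (index t))) s).
  destruct (represents_avoiding k L) as [b1 [Rb1 Nb1]].
  destruct (represents_avoiding k (h b1 :: L)) as [b2 [Rb2 Nb2]].
  (* A single candidate might have h (y m) accumulate at its image; of two
     candidates with distinct images, one keeps infinitely many indices away. *)
  assert (Hb12 : h b1 <> h b2) by (intros E; apply Nb2; left; exact E).
  assert (Hb : exists b, represents k b /\ ~ In (h b) L /\ exists e, 0 < e /\
            infinitely_often (fun m => far_from s m /\ e <= dB (h b) (h (y m)))).
  { destruct (infinitely_often_far hmB (far_from s) (fun m => h (y m)) _ _ Hb12 Hs)
      as [H|H].
    - exists b1. auto.
    - exists b2. split; [exact Rb2 | split; [|exact H]].
      intros Hin. apply Nb2. right. exact Hin. }
  destruct Hb as (b & Rb & Nb & e & He & Hio).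
  destruct (list_dist_lower_bound hmB (h b) L e He) as (r & Hr & Hre & Hfar).
  destruct (Hio k) as (m & Hkm & Fm & Hem).
  set (t := BallChoice b r m).
  assert (Hext : forall m', far_from s m' /\ e <= dB (h b) (h (y m')) -> far_from (t :: s) m').
  { intros m' [Fm' Hm'] t' [<-|Ht']; [simpl; lra | auto]. }
  exists t. split.
  - split; [exact Rb|]. split; [exact Hr|]. split; [exact Hkm|].
    split; [|apply Hext; auto].
    intros t' Ht'. apply Hfar.
    + apply in_map_iff. exists t'. auto.
    + intros E. apply Nb. rewrite <- E. apply in_map_iff. exists t'. auto.
  - intros N. destruct (Hio N) as (m' & HNm' & Hm'). exists m'. auto.
Qed.

Lemma separating_family : exists (b : nat -> A) (r : nat -> R) (m : nat -> nat),
  (forall j, 0 < r j) /\ (forall k, (k <= m k)%nat) /\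
  (forall j k, r j <= dB (h (b j)) (h (y (m k)))) /\
  (forall a, Z a -> forall rho, 0 < rho -> exists j, dA a (b j) < rho).
Proof.
  assert (H0 : infinitely_often (far_from nil)).
  { intros N. exists N. split; [lia | intros t []]. }
  destruct (list_dependent_choice (BallChoice z0 0 O) _ _ H0 good_choice_exists) as [u Hu].
  exists (fun j => center (u j)), (fun j => radius (u j)), (fun k => index (u k)).
  repeat split.
  - intros j. apply (Hu j).
  - intros k. apply (Hu k).
  - intros j k. destruct (Nat.le_gt_cases j k) as [Hjk|Hjk].
    + apply (Hu k). destruct (Nat.eq_dec j k) as [->|Hne].
      * left. reflexivity.
      * right. apply In_history. lia.
    + apply (Hu j). apply In_history. exact Hjk.
  - intros a Za rho Hrho. destruct (W_base a rho Hrho) as [k [Wa Hk]].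
    exists k. apply Hk. destruct (Hu k) as [[[_ HW] _] _]. apply HW. eauto.
Qed.

End SeparatingFamily.

Section LCPreimages.
Context {A B : Type} {dA : A -> A -> R} {dB : B -> B -> R}.
Hypotheses (hmA : is_metric dA) (hmB : is_metric dB).
Variables (h : A -> B) (Z : A -> Prop).
Hypothesis hLC : forall V, is_open dB V -> LC_set dA (fun a => V (h a)).

Lemma LC_preimages_no_separated_sequence (z : A) (x b : nat -> A) (eps : R) (r : nat -> R) :
  0 < eps -> (forall k, Z (x k)) -> (forall k, dA z (x k) < / (INR k + 1)) ->
  (forall k, eps <= dB (h z) (h (x k))) -> (forall j, 0 < r j) ->
  (forall j k, r j <= dB (h (b j)) (h (x k))) ->
  (forall a, Z a -> forall rho, 0 < rho -> exists j, dA a (b j) < rho) -> False.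
Proof.
  intros Heps Zx Hxz Hxfar Hr Hsep Hdense.
  set (V y := dB (h z) y < eps \/ exists j, dB (h (b j)) y < r j).
  assert (OV : is_open dB V).
  { intros y [Hy|[j Hy]].
    - exists (eps - dB (h z) y). split; [lra|]. intros y' Hy'. left.
      pose proof (dist_triangle hmB (h z) y y'). lra.
    - exists (r j - dB (h (b j)) y). split; [lra|]. intros y' Hy'. right. exists j.
      pose proof (dist_triangle hmB (h (b j)) y y'). lra. }
  destruct (hLC V OV) as (U & F & OU & CF & HUF).
  assert (Fb : forall j, F (b j)).
  { intros j. apply (HUF (b j)). right. exists j. rewrite (dist_refl hmB). apply Hr. }
  assert (FZ : forall a, Z a -> F a).
  { intros a Za. apply NNPP. intros Fa. destruct (CF a Fa) as [rho [Hrho Hball]].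
    destruct (Hdense a Za rho Hrho) as [j Hj]. exact (Hball _ Hj (Fb j)). }
  assert (Uz : U z) by (apply (HUF z); left; rewrite (dist_refl hmB); exact Heps).
  destruct (OU z Uz) as [eta [Heta Hball]].
  destruct (archimed_inv eta Heta) as [k Hk].
  assert (HV : V (h (x k))).
  { apply HUF. split; [apply Hball; pose proof (Hxz k); lra | apply FZ, Zx]. }
  destruct HV as [HV|[j HV]].
  - pose proof (Hxfar k). lra.
  - pose proof (Hsep j k). lra.
Qed.

Lemma continuous_on_of_LC_preimages :
  separable dA -> (forall a a', h a = h a' -> a = a') -> dense_in_itself dA Z ->
  continuous_on dA dB h Z.
Proof.
  intros hsA hinj HZ z Zz eps Heps. apply NNPP. intros Hc.
  assert (Hx : forall n, exists x, Z x /\ dA z x < / (INR n + 1) /\ eps <= dB (h z) (h x)).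
  { intros n. apply NNPP. intros Hn. apply Hc.
    exists (/ (INR n + 1)). split; [apply inv_INR_succ_pos|].
    intros x Zx Hzx. apply Rnot_le_lt. intros Hle. apply Hn. eauto. }
  destruct (choice _ Hx) as [x Hx'].
  destruct (separable_countable_base hmA hsA) as (W & W_open & W_base).
  destruct (separating_family hmA hmB h Z W x z hinj HZ Zz W_open W_base)
    as (b & r & m & Hr & Hm & Hsep & Hdense).
  apply (LC_preimages_no_separated_sequence z (fun k => x (m k)) b eps r); auto.
  - intros k. apply Hx'.
  - intros k. pose proof (inv_INR_succ_le _ _ (Hm k)). pose proof (proj1 (proj2 (Hx' (m k)))).
    lra.
  - intros k. apply Hx'.
Qed.

End LCPreimages.

Lemma LC_set_ext {A : Type} (d : A -> A -> R) (P Q : A -> Prop) :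
  (forall a, P a <-> Q a) -> LC_set d P -> LC_set d Q.
Proof.
  intros HPQ (U & F & HU & HF & HP). exists U, F. split; [exact HU|]. split; [exact HF|].
  intros x. rewrite <- HPQ. apply HP.
Qed.

Lemma open_LC_inverse_preimage {X Y : Type} (dX : X -> X -> R) (dY : Y -> Y -> R)
  (f : X -> Y) (g : Y -> X) :
  (forall x, g (f x) = x) -> (forall y, f (g y) = y) -> open_LC dY dX g ->
  forall V, is_open dY V -> LC_set dX (fun x => V (f x)).
Proof.
  intros gf fg hg V HV. apply (LC_set_ext _ _ _) with (2 := hg V HV). intros x. split.
  - intros [y [Vy <-]]. rewrite fg. exact Vy.
  - intros Vx. exists (f x). auto.
Qed.

Lemma continuous_on_sub {A B : Type} (dA : A -> A -> R) (dB : B -> B -> R) (h : A -> B)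
  (P Q : A -> Prop) :
  (forall x, P x -> Q x) -> continuous_on dA dB h Q -> continuous_on dA dB h P.
Proof.
  intros HPQ H x Px e He. destruct (H x (HPQ x Px) e He) as [delta [Hd H']].
  exists delta. split; auto.
Qed.

Lemma continuous_on_subsingleton {A B : Type} (dA : A -> A -> R) (dB : B -> B -> R)
  (h : A -> B) (P : A -> Prop) :
  is_metric dB -> (forall x x', P x -> P x' -> x = x') -> continuous_on dA dB h P.
Proof.
  intros hm HP x Px e He. exists 1. split; [lra|]. intros x' Px' _.
  rewrite (HP x x' Px Px'), (dist_refl hm). exact He.
Qed.

Theorem corollary3 (X Y : Type) (dX : X -> X -> R) (dY : Y -> Y -> R)
  (hX : is_metric dX) (hY : is_metric dY)
  (sX : separable dX) (sY : separable dY)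
  (f : X -> Y) (g : Y -> X)
  (gf : forall x, g (f x) = x) (fg : forall y, f (g y) = y)
  (hf : open_LC dX dY f) (hg : open_LC dY dX g) :
  exists P : nat -> (X -> Prop),
    (forall i j x, P i x -> P j x -> i = j) /\
    (forall x, exists i, P i x) /\
    (forall i, continuous_on dX dY f (P i) /\
               continuous_on dY dX g (image f (P i))).
Proof.
  assert (finj : forall x x', f x = f x' -> x = x').
  { intros x x' E. rewrite <- (gf x), <- (gf x'), E. reflexivity. }
  assert (ginj : forall y y', g y = g y' -> y = y').
  { intros y y' E. rewrite <- (fg y), <- (fg y'), E. reflexivity. }
  assert (contf : continuous_on dX dY f (condensation_point dX)).
  { apply continuous_on_of_LC_preimages; auto.
    - exact (open_LC_inverse_preimage dX dY f g gf fg hg).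
    - exact (condensation_dense_in_itself hX sX). }
  assert (contg : continuous_on dY dX g (condensation_point dY)).
  { apply continuous_on_of_LC_preimages; auto.
    - exact (open_LC_inverse_preimage dY dX g f fg gf hf).
    - exact (condensation_dense_in_itself hY sY). }
  set (C x := ~ condensation_point dX x \/ ~ condensation_point dY (f x)).
  destruct (countable_setU _ _ (countable_not_condensation hX sX)
              (countable_preimage f _ finj (countable_not_condensation hY sY))) as [c Hc].
  exists (fun i x => match i with O => ~ C x | S n => C x /\ c x = n end).
  split; [|split].
  - intros [|i] [|j] x Hi Hj; try tauto. destruct Hi as [_ <-], Hj as [_ <-]. reflexivity.
  - intros x. destruct (classic (C x)) as [Cx|Cx]; [exists (S (c x)) | exists O]; auto.
  - intros [|n]; split.
    + apply (continuous_on_sub _ _ _ _ _) with (2 := contf).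
      intros x Hx. apply NNPP. intros H. apply Hx. left. exact H.
    + apply (continuous_on_sub _ _ _ _ _) with (2 := contg).
      intros y [x [Hx <-]]. apply NNPP. intros H. apply Hx. right. exact H.
    + apply continuous_on_subsingleton; auto.
      intros x x' [Cx Ex] [Cx' Ex']. apply Hc; auto. congruence.
    + apply continuous_on_subsingleton; auto.
      intros y y' [x [[Cx Ex] <-]] [x' [[Cx' Ex'] <-]]. f_equal. apply Hc; auto. congruence.
Qed.
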